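(* Let $n=p+q$, let $h^1,\dots,h^n:\mathbb{R}^{p,q}\to\mathcal{C}\ell_{\circledS}(p,q)$ be a smooth Clifford field vector, $h_\rho=\eta_{\rho\mu}h^\mu$, and let $C_1,\dots,C_n:\mathbb{R}^{p,q}\to\mathcal{C}\ell_{\circledS}(p,q)$ be smooth functions satisfying $$\partial_\mu h_\rho-[C_\mu,h_\rho]=0\quad\text{for all }\mu,\rho=1,\dots,n.$$ Let $S:\mathbb{R}^{p,q}\to\mathcal{C}\ell(p,q)$ be a smooth function with values in invertible elements such that $S^{-1}\partial_\mu S\in\mathcal{C}\ell_{\circledS}(p,q)$ for all $\mu$ and all $x$. Put $\acute h_\rho=S^{-1}h_\rho S$ and $\acute C_\mu=S^{-1}C_\mu S-S^{-1}\partial_\mu S$. Then $\acute h_\rho,\acute C_\mu$ take values in $\mathcal{C}\ell_{\circledS}(p,q)$ and $$\partial_\mu \acute h_\rho-[\acute C_\mu,\acute h_\rho]=0\quad\text{for all }\mu,\rho=1,\dots,n.$$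
   Context: $\mathbb{R}^{p,q}$ is $\mathbb{R}^n$ with Cartesian coordinates $x^1,\dots,x^n$, $\partial_\mu=\partial/\partial x^\mu$, and metric $\eta=(\eta_{\mu\nu})=(\eta^{\mu\nu})=\mathrm{diag}(1,\dots,1,-1,\dots,-1)$ ($p$ ones, $q$ minus ones); Einstein summation is used. $\mathcal{C}\ell(p,q)$ is the complex Clifford algebra with identity $e$ and generators $e^1,\dots,e^n$, $e^ae^b+e^be^a=2\eta^{ab}e$, with basis $e$, $e^{a_1\dots a_k}=e^{a_1}\cdots e^{a_k}$ ($a_1<\dots<a_k$); functions into it are differentiated coefficientwise in this fixed basis. $[U,V]=UV-VU$. $\pi_k$ is the projection onto the span of the basis elements with $k$ indices, $\mathrm{Tr}(U)$ the coefficient of $e$. The center is $\mathcal{C}\ell_0$ for even $n$ and $\mathcal{C}\ell_0\oplus\mathcal{C}\ell_n$ for odd $n$; $\mathcal{C}\ell_{\circledS}(p,q)$ is the set of elements with zero projection onto the center. A Clifford field vector is a collection $h^\mu:\mathbb{R}^{p,q}\to\mathcal{C}\ell(p,q)$, $\mu=1,\dots,n$, with $h^\mu h^\nu+h^\nu h^\mu=2\eta^{\mu\nu}e$ and $\mathrm{Tr}(h^1\cdots h^n)=0$ at every point. *)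

From mathcomp Require Import all_boot all_order all_algebra.
From mathcomp Require Import all_classical all_reals all_analysis.
From mathcomp.real_closed Require Import complex.
Set Implicit Arguments. Unset Strict Implicit. Unset Printing Implicit Defensive.
Import Order.TTheory GRing.Theory Num.Theory.
Import numFieldNormedType.Exports.
Local Open Scope ring_scope.

Section Clifford.
Variables (R : realType) (p q : nat).

(* n = p + q; indices a : 'I_n correspond to 1..n of the paper (shifted). *)
Definition cldim := (p + q)%N.

Definition etad (a : 'I_cldim) : R := if (a < p)%N then 1 else -1.

Definition cleta (a b : 'I_cldim) : R := if a == b then etad a else 0.

(* Elements of Cl(p,q): complex coefficients on the basis e_A, A ⊆ {1..n},
   where e_A = e^{a_1} ... e^{a_k} with a_1 < ... < a_k (e_set0 = e). *)
Definition Cl := {ffun {set 'I_cldim} -> R[i]}.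

(* sign of the product e_A e_B = clsign A B * e_{A Δ B}:
   (-1)^{#{(a,b) in A x B | b < a}} times prod_{a in A ∩ B} cleta^{aa}. *)
Definition clsign (A B : {set 'I_cldim}) : R :=
  (-1) ^+ #|[pred ab : 'I_cldim * 'I_cldim | (ab.1 \in A) && (ab.2 \in B) && (ab.2 < ab.1)%N]|
  * \prod_(a in A :&: B) etad a.

Definition symdiff (A B : {set 'I_cldim}) : {set 'I_cldim} := (A :\: B) :|: (B :\: A).

Definition clmul (U V : Cl) : Cl :=
  [ffun C => \sum_(A : {set 'I_cldim}) \sum_(B : {set 'I_cldim} | symdiff A B == C)
               (clsign A B)%:C%C * U A * V B].

Definition clone : Cl := [ffun A => if A == finset.set0 then 1 else 0].

Definition clscale (r : R) (U : Cl) : Cl := [ffun A => (r%:C)%C * U A].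

Definition clcomm (U V : Cl) : Cl := clmul U V - clmul V U.

Definition clTr (U : Cl) : R[i] := U finset.set0.

(* Cl_S(p,q): zero projection onto the center, i.e. pi_0 U = 0, and
   pi_n U = 0 when n is odd (e_{1..n} is the only basis element with n indices). *)
Definition in_ClS (U : Cl) : Prop :=
  U finset.set0 = 0 /\ (odd cldim -> U finset.setT = 0).

Definition coordvec (mu : 'I_cldim) : 'rV[R]_cldim := delta_mx 0 mu.

Definition rpartial (mu : 'I_cldim) (g : 'rV[R]_cldim -> R) : 'rV[R]_cldim -> R :=
  fun x => 'D_(coordvec mu) g x.

Fixpoint iter_partial (s : seq 'I_cldim) (g : 'rV[R]_cldim -> R) : 'rV[R]_cldim -> R :=
  if s is mu :: s' then rpartial mu (iter_partial s' g) else g.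

Definition rsmooth (g : 'rV[R]_cldim -> R) : Prop :=
  forall s : seq 'I_cldim,
    (forall (x : 'rV[R]_cldim) (mu : 'I_cldim), derivable (iter_partial s g) x (coordvec mu))
    /\ continuous (iter_partial s g : 'rV[R]_cldim -> R).

Definition clsmooth (f : 'rV[R]_cldim -> Cl) : Prop :=
  forall A : {set 'I_cldim},
    rsmooth (fun x => complex.Re (f x A)) /\ rsmooth (fun x => complex.Im (f x A)).

Definition clpartial (mu : 'I_cldim) (f : 'rV[R]_cldim -> Cl) : 'rV[R]_cldim -> Cl :=
  fun x => [ffun A => ((rpartial mu (fun y => complex.Re (f y A)) x)
                        +i* (rpartial mu (fun y => complex.Im (f y A)) x))%C].

Definition clprod_all (h : 'I_cldim -> Cl) : Cl :=
  foldr (fun a acc => clmul (h a) acc) clone (enum 'I_cldim).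

Definition clifford_field_vector (h : 'I_cldim -> 'rV[R]_cldim -> Cl) : Prop :=
  forall x : 'rV[R]_cldim,
    (forall mu nu : 'I_cldim,
        clmul (h mu x) (h nu x) + clmul (h nu x) (h mu x) = clscale (2 * cleta mu nu) clone)
    /\ clTr (clprod_all (fun mu => h mu x)) = 0.

Definition cllower (h : 'I_cldim -> 'rV[R]_cldim -> Cl) (rho : 'I_cldim) : 'rV[R]_cldim -> Cl :=
  fun x => \sum_(mu : 'I_cldim) clscale (cleta rho mu) (h mu x).

End Clifford.

From HB Require Import structures.
From mathcomp Require Import all_boot all_order all_algebra.
From mathcomp Require Import all_classical all_reals all_analysis.
From mathcomp.real_closed Require Import complex.
From mathcomp Require Import ring lra.
Set Implicit Arguments. Unset Strict Implicit. Unset Printing Implicit Defensive.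
Import Order.TTheory GRing.Theory Num.Theory.
Import numFieldNormedType.Exports.
Local Open Scope ring_scope.

(* The Clifford product makes Cl(p,q) an associative ring, because the sign of
   e_A e_B is a 2-cocycle for symmetric difference of index sets.  The
   coefficient of e and, for odd n, that of e_1...e_n satisfy (UV)_A = (VU)_A,
   so conjugation by S preserves Cl_S.
   Difference quotients are controlled by the l1 norm of the coefficients,
   which is submultiplicative since all signs are +-1; this yields the Leibniz
   rule and d(S^-1) = - S^-1 (dS) S^-1.  After substituting d h = [C, h], the
   transformed field equation is a ring identity using only S S^-1 = 1. *)

Section CliffordRing.
Variables (R : realType) (p q : nat).
Local Notation n := (cldim p q).
Local Notation Idx := {set 'I_n}.
Local Notation Cl := (Cl R p q).

Lemma in_symdiff (A B : Idx) x : (x \in symdiff A B) = (x \in A) (+) (x \in B).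
Proof. by rewrite !inE; case: (x \in A); case: (x \in B). Qed.

Lemma symdiffK (A B : Idx) : symdiff A (symdiff A B) = B.
Proof. by apply/setP=> x; rewrite !in_symdiff addKb. Qed.

Lemma symdiffC (A B : Idx) : symdiff A B = symdiff B A.
Proof. by apply/setP=> x; rewrite !in_symdiff addbC. Qed.

Lemma symdiff0s (A : Idx) : symdiff finset.set0 A = A.
Proof. by apply/setP=> x; rewrite in_symdiff inE. Qed.

Lemma symdiffss (A : Idx) : symdiff A A = finset.set0.
Proof. by apply/setP=> x; rewrite in_symdiff inE addbb. Qed.

Lemma eq_symdiff (A B C : Idx) : (symdiff A B == C) = (B == symdiff A C).
Proof. by apply/eqP/eqP => [<-|->]; rewrite symdiffK. Qed.

Lemma clmulE (U V : Cl) C :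
  clmul U V C = \sum_(A : Idx) (clsign R A (symdiff A C))%:C%C * U A * V (symdiff A C).
Proof.
rewrite ffunE; apply: eq_bigr => A _.
by rewrite (eq_bigl (pred1 (symdiff A C))) ?big_pred1_eq // => B; rewrite eq_symdiff.
Qed.

Lemma clsign_prod (A B : Idx) : clsign R A B =
  (\prod_(a : 'I_n) \prod_(b : 'I_n) (-1) ^+ [&& a \in A, b \in B & (b < a)%N]) *
  \prod_(a : 'I_n) (if (a \in A) && (a \in B) then etad R a else 1).
Proof.
rewrite /clsign; congr (_ * _); last first.
  by rewrite big_mkcond; apply: eq_bigr => a _; rewrite inE.
rewrite pair_big /= -prodr_const big_mkcond /=.
by apply: eq_bigr => -[a b] _; rewrite inE /= andbA; case: ifP.
Qed.

Lemma etad_sqr (a : 'I_n) : etad R a * etad R a = 1.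
Proof. by rewrite /etad; case: ifP; rewrite ?mulr1 ?mulrNN ?mulr1. Qed.

Lemma clsign_cocycle (A B C : Idx) :
  clsign R A B * clsign R (symdiff A B) C = clsign R B C * clsign R A (symdiff B C).
Proof.
rewrite !clsign_prod mulrACA [RHS]mulrACA; congr (_ * _).
  rewrite -!big_split; apply: eq_bigr => a _; rewrite -!big_split.
  apply: eq_bigr => b _; rewrite !in_symdiff.
  move: (a \in A) (a \in B) (a \in C) (b \in B) (b \in C) (b < a)%N.
  by do 6!case; rewrite /= ?expr0 ?expr1 ?mulrNN ?mulr1 ?mul1r.
rewrite -!big_split; apply: eq_bigr => a _; rewrite !in_symdiff.
have := etad_sqr a.
move: (a \in A) (a \in B) (a \in C) (etad R a) => + + + e.
by do 3!case; rewrite /= ?mulr1 ?mul1r => // ->.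
Qed.

Lemma clmulA : associative (@clmul R p q).
Proof.
move=> U V W; apply/ffunP => E; symmetry; rewrite !clmulE.
under eq_bigr => D _ do rewrite clmulE mulr_sumr mulr_suml.
rewrite exchange_big /=; apply: eq_bigr => A _.
rewrite (reindex_inj (can_inj (symdiffK A))) /= clmulE mulr_sumr.
apply: eq_bigr => B _; rewrite symdiffK.
set C := symdiff (symdiff A B) E.
have -> : symdiff B (symdiff A E) = C.
  by apply/setP=> x; rewrite /C !in_symdiff; case: (x \in A); case: (x \in B); case: (x \in E).
have -> : symdiff A E = symdiff B C.
  by apply/setP=> x; rewrite /C !in_symdiff; case: (x \in A); case: (x \in B); case: (x \in E).
transitivity ((clsign R A B * clsign R (symdiff A B) C)%:C%C * (U A * V B * W C)).
  by rewrite [in RHS]rmorphM /=; ring.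
by rewrite clsign_cocycle [in LHS]rmorphM /=; ring.
Qed.

Lemma clsign0s (A : Idx) : clsign R finset.set0 A = 1.
Proof.
rewrite clsign_prod !big1 ?mulr1 // => a _; rewrite ?inE //.
by rewrite big1 // => b _; rewrite inE.
Qed.

Lemma clsigns0 (A : Idx) : clsign R A finset.set0 = 1.
Proof.
rewrite clsign_prod !big1 ?mulr1 // => a _; rewrite ?inE ?andbF //.
by rewrite big1 // => b _; rewrite inE andbF.
Qed.

Lemma clmul1l (U : Cl) : clmul (clone R p q) U = U.
Proof.
apply/ffunP => C; rewrite clmulE (bigD1 finset.set0) //= big1 ?addr0.
  by rewrite ffunE eqxx symdiff0s clsign0s mulr1 mul1r.
by move=> A /negPf hA; rewrite ffunE hA mulr0 mul0r.
Qed.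

Lemma clmul1r (U : Cl) : clmul U (clone R p q) = U.
Proof.
apply/ffunP => C; rewrite clmulE (bigD1 C) //= big1 ?addr0.
  by rewrite ffunE symdiffss eqxx clsigns0 mulr1 mul1r.
move=> A hA; rewrite ffunE.
have -> : (symdiff A C == finset.set0) = false.
  by apply/negbTE; apply: contra hA; rewrite eq_symdiff symdiffC symdiff0s eq_sym.
by rewrite mulr0.
Qed.

Lemma clmulDl : left_distributive (@clmul R p q) +%R.
Proof.
move=> U V W; apply/ffunP => C; rewrite clmulE ffunE !clmulE -big_split.
by apply: eq_bigr => A _; rewrite ffunE mulrDr mulrDl.
Qed.

Lemma clmulDr : right_distributive (@clmul R p q) +%R.
Proof.
move=> U V W; apply/ffunP => C; rewrite clmulE ffunE !clmulE -big_split.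
by apply: eq_bigr => A _; rewrite ffunE mulrDr.
Qed.

HB.instance Definition _ := GRing.Zmodule.on Cl.
HB.instance Definition _ :=
  GRing.Zmodule_isPzRing.Build Cl clmulA clmul1l clmul1r clmulDl clmulDr.

Lemma clmul_mul (U V : Cl) : clmul U V = U * V. Proof. by []. Qed.

Lemma clscaleAl r (U V : Cl) : clscale r U * V = clscale r (U * V).
Proof.
apply/ffunP => C; rewrite -!clmul_mul clmulE ffunE clmulE mulr_sumr.
by apply: eq_bigr => A _; rewrite ffunE mulrCA !mulrA.
Qed.

Lemma clscaleAr r (U V : Cl) : U * clscale r V = clscale r (U * V).
Proof.
apply/ffunP => C; rewrite -!clmul_mul clmulE ffunE clmulE mulr_sumr.
by apply: eq_bigr => A _; rewrite ffunE mulrCA [r%:C%C * (_ * _)]mulrCA mulrA.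
Qed.

Lemma clscaleD r (U V : Cl) : clscale r (U + V) = clscale r U + clscale r V.
Proof. by apply/ffunP => C; rewrite !ffunE mulrDr. Qed.

Lemma clscaleN r (U : Cl) : clscale r (- U) = - clscale r U.
Proof. by apply/ffunP => C; rewrite !ffunE mulrN. Qed.

Lemma clscaleB r (U V : Cl) : clscale r (U - V) = clscale r U - clscale r V.
Proof. by rewrite clscaleD clscaleN. Qed.

Lemma clscale0 (U : Cl) : clscale 0 U = 0.
Proof. by apply/ffunP => C; rewrite !ffunE mul0r. Qed.

Lemma clscale1 (U : Cl) : clscale 1 U = U.
Proof. by apply/ffunP => C; rewrite !ffunE mul1r. Qed.

Lemma clscaleM r s (U : Cl) : clscale r (clscale s U) = clscale (r * s) U.
Proof. by apply/ffunP => C; rewrite !ffunE rmorphM mulrA. Qed.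

End CliffordRing.

Section CentralCoefficients.
Variables (R : realType) (p q : nat).
Local Notation n := (cldim p q).
Local Notation Idx := {set 'I_n}.
Local Notation Cl := (Cl R p q).

Lemma coef0_mulC (U V : Cl) : (U * V) finset.set0 = (V * U) finset.set0.
Proof.
rewrite -!clmul_mul !clmulE; apply: eq_bigr => A _.
by rewrite symdiffC symdiff0s -!mulrA [U A * _]mulrC.
Qed.

Definition inversions (X Y : Idx) : nat :=
  \sum_(a : 'I_n) \sum_(b : 'I_n) [&& a \in X, b \in Y & (b < a)%N].

Lemma clsign_disjoint (X Y : Idx) :
  X :&: Y = finset.set0 -> clsign R X Y = (-1) ^+ inversions X Y.
Proof.
move=> XY0; rewrite /clsign XY0 big_set0 mulr1; congr (_ ^+ _).
rewrite /inversions pair_big /= -sum1_card big_mkcond /=.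
by apply: eq_bigr => -[a b] _; rewrite inE /= andbA; case: ifP.
Qed.

(* Every pair (a, b) with a in A and b outside A is an inversion in exactly
   one of the two orders. *)
Lemma inversions_compl (A : Idx) :
  (inversions A (~: A) + inversions (~: A) A = #|A| * #|~: A|)%N.
Proof.
rewrite /inversions [X in (_ + X)%N]exchange_big -big_split /=.
under eq_bigr => i _ do rewrite -big_split /=.
rewrite -(cardsX A (~: A)) -sum1_card big_mkcond /= pair_big /=.
rewrite [in RHS]big_mkcond /=; apply: eq_bigr => -[a b] _ /=; rewrite !inE /=.
case: (boolP (a \in A)) => ha; case: (boolP (b \in A)) => hb //=.
have neq : a != b by apply: contraNneq hb => <-.
by case: ltngtP neq => // [] /val_inj ->; rewrite eqxx.
Qed.

(* For odd n, #|A| * #|~: A| is even, so e_A and e_{~: A} commute. *)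
Lemma coefT_mulC (U V : Cl) : odd n -> (U * V) finset.setT = (V * U) finset.setT.
Proof.
move=> n_odd; rewrite -!clmul_mul !clmulE.
have symdiffT (A : Idx) : symdiff A finset.setT = ~: A.
  by apply/setP=> x; rewrite in_symdiff !inE; case: (x \in A).
under eq_bigr => A _ do rewrite symdiffT.
under [in RHS]eq_bigr => A _ do rewrite symdiffT.
rewrite [in RHS](reindex_inj (can_inj (@finset.setCK _))) /=.
apply: eq_bigr => A _; rewrite finset.setCK.
rewrite !clsign_disjoint ?finset.setICr //; last by rewrite finset.setIC finset.setICr.
have : odd (inversions A (~: A)) = odd (inversions (~: A) A).
  have := congr1 odd (inversions_compl A); rewrite oddD oddM.
  have := congr1 odd (cardsC A); rewrite oddD card_ord n_odd.
  by case: (odd (inversions A _)); case: (odd (inversions _ A));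
     case: (odd #|A|); case: (odd #|~: A|).
by rewrite -signr_odd => ->; rewrite signr_odd -!mulrA [V _ * _]mulrC.
Qed.

Lemma in_ClS_conj (S Si U : Cl) : S * Si = 1 -> in_ClS U -> in_ClS (Si * (U * S)).
Proof.
move=> SSi [U0 UT]; split; first by rewrite coef0_mulC -mulrA SSi mulr1.
by move=> n_odd; rewrite coefT_mulC // -mulrA SSi mulr1 UT.
Qed.

Lemma in_ClSB (U V : Cl) : in_ClS U -> in_ClS V -> in_ClS (U - V).
Proof.
move=> [U0 UT] [V0 VT]; split; first by rewrite !ffunE U0 V0 subrr.
by move=> n_odd; rewrite !ffunE UT // VT // subrr.
Qed.

Lemma in_ClS_scale r (U : Cl) : in_ClS U -> in_ClS (clscale r U).
Proof.
move=> [U0 UT]; split; first by rewrite ffunE U0 mulr0.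
by move=> n_odd; rewrite ffunE UT // mulr0.
Qed.

End CentralCoefficients.

Section Norm.
Variables (R : realType) (p q : nat).
Local Notation n := (cldim p q).
Local Notation Idx := {set 'I_n}.
Local Notation Cl := (Cl R p q).

Definition norm1 (z : R[i]) : R := `|complex.Re z| + `|complex.Im z|.
Definition clnorm (U : Cl) : R := \sum_(A : Idx) norm1 (U A).

Lemma norm1_ge0 z : 0 <= norm1 z.
Proof. by rewrite addr_ge0. Qed.

Lemma norm10 : norm1 0 = 0.
Proof. by rewrite /norm1 /= normr0 addr0. Qed.

Lemma norm1N z : norm1 (- z) = norm1 z.
Proof. by case: z => a b; rewrite /norm1 /= !normrN. Qed.

Lemma norm1D z w : norm1 (z + w) <= norm1 z + norm1 w.
Proof.
case: z => a1 a2; case: w => b1 b2; rewrite /norm1 /= addrACA.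
by apply: lerD; exact: ler_normD.
Qed.

Lemma norm1M z w : norm1 (z * w) <= norm1 z * norm1 w.
Proof.
case: z => a1 a2; case: w => b1 b2; rewrite /norm1 /= mulrDl !mulrDr -!normrM.
by apply: (le_trans (lerD (ler_normB _ _) (ler_normD _ _))); lra.
Qed.

Lemma norm1_realM (r : R) z : norm1 ((r%:C)%C * z) = `|r| * norm1 z.
Proof. by case: z => a b; rewrite /norm1 /= !mul0r subr0 addr0 mulrDr !normrM. Qed.

Lemma norm1_sum (I : Type) (s : seq I) (f : I -> R[i]) :
  norm1 (\sum_(i <- s) f i) <= \sum_(i <- s) norm1 (f i).
Proof.
elim: s => [|i s IHs]; first by rewrite !big_nil norm10.
by rewrite !big_cons; apply: (le_trans (norm1D _ _)); exact: lerD.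
Qed.

Lemma clnorm_ge0 U : 0 <= clnorm U.
Proof. by apply: sumr_ge0 => A _; exact: norm1_ge0. Qed.

Lemma clnorm0 : clnorm 0 = 0.
Proof. by rewrite /clnorm big1 // => A _; rewrite ffunE norm10. Qed.

Lemma clnormN (U : Cl) : clnorm (- U) = clnorm U.
Proof. by apply: eq_bigr => A _; rewrite ffunE norm1N. Qed.

Lemma clnormD (U V : Cl) : clnorm (U + V) <= clnorm U + clnorm V.
Proof.
by rewrite /clnorm -big_split; apply: ler_sum => A _; rewrite ffunE norm1D.
Qed.

Lemma clnorm_scale r (U : Cl) : clnorm (clscale r U) = `|r| * clnorm U.
Proof. by rewrite /clnorm mulr_sumr; apply: eq_bigr => A _; rewrite ffunE norm1_realM. Qed.

Lemma norm1_le_clnorm (U : Cl) A : norm1 (U A) <= clnorm U.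
Proof.
rewrite /clnorm (bigD1 A) //= lerDl.
by apply: sumr_ge0 => ? _; exact: norm1_ge0.
Qed.

Lemma normr_clsign (A B : Idx) : `|clsign R A B| = 1.
Proof.
rewrite /clsign normrM normrX normrN normr1 expr1n mul1r.
elim/big_rec: _ => [|a x _ x1]; first by rewrite normr1.
by rewrite normrM x1 /etad; case: ifP; rewrite ?normrN normr1 mulr1.
Qed.

Lemma clnormM (U V : Cl) : clnorm (U * V) <= clnorm U * clnorm V.
Proof.
apply: (le_trans (y := \sum_(C : Idx) \sum_(A : Idx) norm1 (U A) * norm1 (V (symdiff A C)))).
  apply: ler_sum => C _; rewrite -clmul_mul clmulE.
  apply: (le_trans (norm1_sum _ _)); apply: ler_sum => A _.
  by rewrite -mulrA norm1_realM normr_clsign mul1r norm1M.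
rewrite exchange_big mulr_suml /=; apply: ler_sum => A _.
rewrite -mulr_sumr (reindex_inj (can_inj (symdiffK A))) /=.
by under eq_bigr => B _ do rewrite symdiffK.
Qed.

End Norm.

Section PuncturedLimits.
Local Open Scope classical_set_scope.
Variable R : realType.

Lemma cvg_normr_at0 : `|t| @[t --> (0:R)^'] --> (0:R).
Proof.
have id0 : (fun t : R => t) @ (0:R)^' --> (0:R) by exact: cvg_within.
by have := cvg_norm id0; rewrite normr0; apply.
Qed.

Lemma squeeze_cvg0 (f g : R -> R) :
  (\forall t \near (0:R)^', 0 <= f t <= g t) ->
  g t @[t --> (0:R)^'] --> (0:R) -> f t @[t --> (0:R)^'] --> (0:R).
Proof. by move=> fg g0; apply: (squeeze_cvgr fg (cvg_cst 0) g0). Qed.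

Lemma sum_cvg0 (I : Type) (s : seq I) (g : I -> R -> R) :
  (forall i, g i t @[t --> (0:R)^'] --> (0:R)) ->
  (\sum_(i <- s) g i t) @[t --> (0:R)^'] --> (0:R).
Proof.
move=> g0; elim: s => [|i s IHs].
  by under eq_fun do rewrite big_nil; exact: cvg_cst.
under eq_fun do rewrite big_cons.
by have := cvgD (g0 i) IHs; rewrite addr0; apply.
Qed.

End PuncturedLimits.

Section CliffordLimits.
Local Open Scope classical_set_scope.
Variables (R : realType) (p q : nat).
Local Notation Cl := (Cl R p q).

Definition clcvg (f : R -> Cl) (L : Cl) := clnorm (f t - L) @[t --> (0:R)^'] --> (0:R).

Lemma clcvg_cst L : clcvg (fun _ => L) L.
Proof. by rewrite /clcvg; under eq_fun do rewrite subrr clnorm0; exact: cvg_cst. Qed.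

Lemma clcvgN f L : clcvg f L -> clcvg (fun t => - f t) (- L).
Proof. by move=> fL; rewrite /clcvg; under eq_fun do rewrite -opprD clnormN. Qed.

Lemma clcvgD f g L M : clcvg f L -> clcvg g M -> clcvg (fun t => f t + g t) (L + M).
Proof.
move=> fL gM; apply: (squeeze_cvg0 (g := fun t => clnorm (f t - L) + clnorm (g t - M))).
  by near=> t; rewrite clnorm_ge0 /= opprD addrACA clnormD.
by have := cvgD fL gM; rewrite addr0; apply.
Unshelve. all: end_near.
Qed.

Lemma clcvgM f g L M : clcvg f L -> clcvg g M -> clcvg (fun t => f t * g t) (L * M).
Proof.
move=> fL gM; apply: (squeeze_cvg0 (g := fun t =>
  clnorm (f t - L) * (clnorm (g t - M) + clnorm M) + clnorm L * clnorm (g t - M))).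
  near=> t; rewrite clnorm_ge0 /=.
  have -> : f t * g t - L * M = (f t - L) * (g t - M) + (f t - L) * M + L * (g t - M).
    by rewrite -mulrDr subrK mulrBl mulrBr addrA subrK.
  apply: (le_trans (clnormD _ _)); apply: lerD; last exact: clnormM.
  apply: (le_trans (clnormD _ _)); rewrite [leRHS]mulrDr.
  by apply: lerD; exact: clnormM.
have := cvgD (cvgM fL (cvgD gM (cvg_cst (clnorm M)))) (cvgM (cvg_cst (clnorm L)) gM).
by rewrite mul0r mulr0 addr0; apply.
Unshelve. all: end_near.
Qed.

Lemma clcvg_scale r f L : clcvg f L -> clcvg (fun t => clscale r (f t)) (clscale r L).
Proof.
move=> fL; rewrite /clcvg; under eq_fun do rewrite -clscaleB clnorm_scale.
by have := cvgM (cvg_cst `|r|) fL; rewrite mulr0; apply.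
Qed.

Lemma ReB (z w : R[i]) : complex.Re (z - w) = complex.Re z - complex.Re w.
Proof. by case: z; case: w. Qed.

Lemma ImB (z w : R[i]) : complex.Im (z - w) = complex.Im z - complex.Im w.
Proof. by case: z; case: w. Qed.

Lemma Re_realM (r : R) (z : R[i]) : complex.Re ((r%:C)%C * z) = r * complex.Re z.
Proof. by case: z => a b /=; rewrite mul0r subr0. Qed.

Lemma Im_realM (r : R) (z : R[i]) : complex.Im ((r%:C)%C * z) = r * complex.Im z.
Proof. by case: z => a b /=; rewrite mul0r addr0. Qed.

Lemma clcvg_Re (f : R -> Cl) (L : Cl) A : clcvg f L -> complex.Re (f t A) @[t --> (0:R)^'] --> complex.Re (L A).
Proof.
move=> fL; apply/subr_cvg0/norm_cvg0P.
apply: (squeeze_cvg0 (g := fun t => clnorm (f t - L))) => //; near=> t.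
rewrite normr_ge0 -ReB; have := norm1_le_clnorm (f t - L) A.
by rewrite !ffunE; apply: le_trans; rewrite lerDl.
Unshelve. all: end_near.
Qed.

Lemma clcvg_Im (f : R -> Cl) (L : Cl) A : clcvg f L -> complex.Im (f t A) @[t --> (0:R)^'] --> complex.Im (L A).
Proof.
move=> fL; apply/subr_cvg0/norm_cvg0P.
apply: (squeeze_cvg0 (g := fun t => clnorm (f t - L))) => //; near=> t.
rewrite normr_ge0 -ImB; have := norm1_le_clnorm (f t - L) A.
by rewrite !ffunE; apply: le_trans; rewrite lerDr.
Unshelve. all: end_near.
Qed.

Lemma clcvg_coef (f : R -> Cl) (L : Cl) :
  (forall A, complex.Re (f t A) @[t --> (0:R)^'] --> complex.Re (L A)) ->
  (forall A, complex.Im (f t A) @[t --> (0:R)^'] --> complex.Im (L A)) ->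
  clcvg f L.
Proof.
move=> fRe fIm; rewrite /clcvg /clnorm.
under eq_fun do under eq_bigr do rewrite !ffunE /norm1 ReB ImB.
apply: sum_cvg0 => A.
have dist0 (g : R -> R) l : g t @[t --> (0:R)^'] --> l -> `|g t - l| @[t --> (0:R)^'] --> (0:R).
  by move=> gl; have := cvg_norm (proj2 (subr_cvg0 _ _) gl); rewrite normr0; apply.
by have := cvgD (dist0 _ _ (fRe A)) (dist0 _ _ (fIm A)); rewrite addr0; apply.
Qed.

End CliffordLimits.

Section DifferenceQuotients.
Local Open Scope classical_set_scope.
Variables (R : realType) (p q : nat).
Local Notation n := (cldim p q).
Local Notation Cl := (Cl R p q).
Local Notation V := 'rV[R]_n.

Definition dquot (F : V -> Cl) (x v : V) (t : R) : Cl :=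
  clscale t^-1 (F (t *: v + x) - F x).

Lemma dquot_Re (F : V -> Cl) x v A :
  (fun t : R => t^-1 *: (((fun y => complex.Re (F y A)) \o shift x) (t *: v)
     - complex.Re (F x A))) = (fun t => complex.Re (dquot F x v t A)).
Proof. by apply/funext => t; rewrite /dquot !ffunE Re_realM ReB. Qed.

Lemma dquot_Im (F : V -> Cl) x v A :
  (fun t : R => t^-1 *: (((fun y => complex.Im (F y A)) \o shift x) (t *: v)
     - complex.Im (F x A))) = (fun t => complex.Im (dquot F x v t A)).
Proof. by apply/funext => t; rewrite /dquot !ffunE Im_realM ImB. Qed.

Lemma clpartial_cvg (F : V -> Cl) x mu (L : Cl) :
  clcvg (dquot F x (@coordvec R p q mu)) L -> clpartial mu F x = L.
Proof.
move=> FL; apply/ffunP => A; rewrite ffunE /rpartial /derive dquot_Re dquot_Im.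
rewrite (cvg_lim (@Rhausdorff R) (clcvg_Re (A := A) FL)).
by rewrite (cvg_lim (@Rhausdorff R) (clcvg_Im (A := A) FL)); case: (L A).
Qed.

Lemma clsmooth_cvg (F : V -> Cl) x mu :
  clsmooth F -> clcvg (dquot F x (@coordvec R p q mu)) (clpartial mu F x).
Proof.
move=> F_smooth; apply: clcvg_coef => A; rewrite ffunE /rpartial /derive /=.
- by have := ((F_smooth A).1 [::]).1 x mu; rewrite /derivable /= dquot_Re.
- by have := ((F_smooth A).2 [::]).1 x mu; rewrite /derivable /= dquot_Im.
Qed.

Lemma clcvg_shift (F : V -> Cl) x v L :
  clcvg (dquot F x v) L -> clcvg (fun t => F (t *: v + x)) (F x).
Proof.
move=> FL; apply: (squeeze_cvg0 (g := fun t =>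
  `|t| * (clnorm (dquot F x v t - L) + clnorm L))).
  near=> t; rewrite clnorm_ge0 /=.
  have t_neq0 : t != 0 by near: t; exact: nbhs_dnbhs_neq.
  have -> : F (t *: v + x) - F x = clscale t (dquot F x v t).
    by rewrite /dquot clscaleM mulfV // clscale1.
  rewrite clnorm_scale; apply: ler_wpM2l; first exact: normr_ge0.
  by rewrite -{1}(subrK L (dquot F x v t)) clnormD.
have := cvgM (@cvg_normr_at0 R) (cvgD FL (cvg_cst (clnorm L))).
by rewrite mul0r; apply.
Unshelve. all: end_near.
Qed.

Lemma dquotM (F G : V -> Cl) x v t :
  dquot (fun y => F y * G y) x v t = dquot F x v t * G (t *: v + x) + F x * dquot G x v t.
Proof.
rewrite /dquot clscaleAl clscaleAr -clscaleD; congr clscale.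
by rewrite mulrBl mulrBr addrA subrK.
Qed.

Lemma clcvg_dquotM (F G : V -> Cl) x v L M :
  clcvg (dquot F x v) L -> clcvg (dquot G x v) M ->
  clcvg (dquot (fun y => F y * G y) x v) (L * G x + F x * M).
Proof.
move=> FL GM; rewrite /clcvg; under eq_fun do rewrite dquotM.
apply: clcvgD; first exact: clcvgM FL (clcvg_shift GM).
exact: clcvgM (clcvg_cst _) GM.
Qed.

Variables (S Si : V -> Cl).
Hypothesis S_inv : forall y, S y * Si y = 1 /\ Si y * S y = 1.

Lemma subV y x : Si y - Si x = - (Si y * (S y - S x) * Si x).
Proof. by rewrite mulrBr mulrBl (S_inv y).2 mul1r -mulrA (S_inv x).1 mulr1 opprB. Qed.

Lemma dquotV x v t : dquot Si x v t = - (Si (t *: v + x) * dquot S x v t * Si x).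
Proof. by rewrite /dquot clscaleAr clscaleAl -clscaleN subV. Qed.

Lemma clnorm_subV y x :
  clnorm (S y - S x) * clnorm (Si x) <= 1 / 2 ->
  clnorm (Si y - Si x) <= 2 * (clnorm (Si x) * clnorm (S y - S x) * clnorm (Si x)).
Proof.
move=> da_small.
have split_subV : Si y - Si x =
    - ((Si y - Si x) * (S y - S x) * Si x) - Si x * (S y - S x) * Si x.
  by rewrite {1}subV -{1}(subrK (Si x) (Si y)) !mulrDl opprD.
have e_le : clnorm (Si y - Si x) <=
    clnorm (Si y - Si x) * clnorm (S y - S x) * clnorm (Si x)
    + clnorm (Si x) * clnorm (S y - S x) * clnorm (Si x).
  rewrite {1}split_subV; apply: (le_trans (clnormD _ _)); rewrite !clnormN.
  by apply: lerD; apply: (le_trans (clnormM _ _));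
     apply: ler_wpM2r (clnorm_ge0 _) _ _ (clnormM _ _).
have := clnorm_ge0 (Si y - Si x).
have : clnorm (Si y - Si x) * clnorm (S y - S x) * clnorm (Si x)
    <= clnorm (Si y - Si x) * (1 / 2).
  by rewrite -mulrA ler_wpM2l ?clnorm_ge0.
lra.
Qed.

Lemma clcvg_shiftV x v L :
  clcvg (dquot S x v) L -> clcvg (fun t => Si (t *: v + x)) (Si x).
Proof.
move=> SL; have S_cont := clcvg_shift SL.
set a := clnorm (Si x).
have da0 : (clnorm (S (t *: v + x) - S x) * a) @[t --> (0:R)^'] --> (0:R).
  by have := cvgM S_cont (cvg_cst a); rewrite mul0r; apply.
have da_small : \forall t \near (0:R)^', clnorm (S (t *: v + x) - S x) * a < 1 / 2.
  by apply: (cvgr_lt 0 da0); rewrite divr_gt0.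
apply: (squeeze_cvg0 (g := fun t => 2 * (a * clnorm (S (t *: v + x) - S x) * a))).
  near=> t; rewrite clnorm_ge0 clnorm_subV // ltW //.
  by near: t; exact: da_small.
have := cvgM (cvg_cst (2:R)) (cvgM (cvgM (cvg_cst a) S_cont) (cvg_cst a)).
by rewrite mulr0 mul0r mulr0; apply.
Unshelve. all: end_near.
Qed.

Lemma clcvg_dquotV x v L :
  clcvg (dquot S x v) L -> clcvg (dquot Si x v) (- (Si x * L * Si x)).
Proof.
move=> SL; rewrite /clcvg; under eq_fun do rewrite dquotV.
apply: clcvgN; apply: clcvgM (clcvg_cst _).
exact: clcvgM (clcvg_shiftV SL) SL.
Qed.

End DifferenceQuotients.

Lemma gauge_comm (K : pzRingType) (i s s' c g : K) : s * i = 1 ->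
  (i * (c * s) - i * s') * (i * (g * s)) - (i * (g * s)) * (i * (c * s) - i * s') =
  - (i * s' * i) * (g * s) + i * ((c * g - g * c) * s + g * s').
Proof.
move=> si; have sK X : X * s * i = X by rewrite -mulrA si mulr1.
rewrite !(mulrBl, mulrBr, mulrDl, mulrDr, mulNr, mulrN) !mulrA !sK.
by rewrite [RHS]addrC [LHS]addrAC; congr (_ + _); rewrite opprB addrCA addrC.
Qed.

Section GaugeDerivative.
Variables (R : realType) (p q : nat).
Local Notation n := (cldim p q).
Local Notation Cl := (Cl R p q).
Local Notation V := 'rV[R]_n.

Lemma cllowerE (h : 'I_n -> V -> Cl) rho :
  cllower h rho = fun x => clscale (etad R rho) (h rho x).
Proof.
apply/funext => x; rewrite /cllower (bigD1 rho) //= big1 ?addr0 /cleta ?eqxx //.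
by move=> mu /negPf mu_neq; rewrite eq_sym mu_neq clscale0.
Qed.

Lemma clcvg_dquot_scale r (F : V -> Cl) x v L :
  clcvg (dquot F x v) L -> clcvg (dquot (fun y => clscale r (F y)) x v) (clscale r L).
Proof.
have -> : dquot (fun y => clscale r (F y)) x v = fun t => clscale r (dquot F x v t).
  by apply/funext => t; rewrite /dquot -clscaleB !clscaleM mulrC.
exact: clcvg_scale.
Qed.

Lemma clpartial_conj (S Si H : V -> Cl) mu x :
  (forall y, S y * Si y = 1 /\ Si y * S y = 1) ->
  clcvg (dquot S x (@coordvec R p q mu)) (clpartial mu S x) ->
  clcvg (dquot H x (@coordvec R p q mu)) (clpartial mu H x) ->
  clpartial mu (fun y => Si y * (H y * S y)) x =
    - (Si x * clpartial mu S x * Si x) * (H x * S x)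
    + Si x * (clpartial mu H x * S x + H x * clpartial mu S x).
Proof.
move=> S_inv dS dH; apply: clpartial_cvg.
exact: clcvg_dquotM (clcvg_dquotV S_inv dS) (clcvg_dquotM dH dS).
Qed.

End GaugeDerivative.

Theorem theorem6 (R : realType) (p q : nat)
  (h : 'I_(cldim p q) -> 'rV[R]_(cldim p q) -> Cl R p q)
  (C : 'I_(cldim p q) -> 'rV[R]_(cldim p q) -> Cl R p q)
  (S Sinv : 'rV[R]_(cldim p q) -> Cl R p q) :
  (forall mu, clsmooth (h mu)) ->
  (forall mu x, in_ClS (h mu x)) ->
  clifford_field_vector h ->
  (forall mu, clsmooth (C mu)) ->
  (forall mu x, in_ClS (C mu x)) ->
  (forall mu rho x,
     clpartial mu (cllower h rho) x - clcomm (C mu x) (cllower h rho x) = 0) ->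
  clsmooth S ->
  (forall x, clmul (S x) (Sinv x) = clone R p q /\ clmul (Sinv x) (S x) = clone R p q) ->
  (forall mu x, in_ClS (clmul (Sinv x) (clpartial mu S x))) ->
  let hacute := fun rho x => clmul (Sinv x) (clmul (cllower h rho x) (S x)) in
  let Cacute := fun mu x =>
      clmul (Sinv x) (clmul (C mu x) (S x)) - clmul (Sinv x) (clpartial mu S x) in
  (forall rho x, in_ClS (hacute rho x)) /\
  (forall mu x, in_ClS (Cacute mu x)) /\
  (forall mu rho x,
     clpartial mu (hacute rho) x - clcomm (Cacute mu x) (hacute rho x) = 0).
Proof.
move=> h_smooth h_ClS _ _ C_ClS h_eq S_smooth S_inv dS_ClS hacute Cacute.
have S_inv' : forall x, S x * Sinv x = 1 /\ Sinv x * S x = 1 := S_inv.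
split; [|split].
- move=> rho x; rewrite /hacute cllowerE.
  exact/(in_ClS_conj (S_inv' x).1)/in_ClS_scale/h_ClS.
- move=> mu x; apply: in_ClSB (dS_ClS mu x).
  exact: in_ClS_conj (S_inv' x).1 (C_ClS mu x).
move=> mu rho x.
have dH0 := clcvg_dquot_scale (etad R rho) (clsmooth_cvg x mu (h_smooth rho)).
rewrite -cllowerE in dH0; have dH := dH0; rewrite -(clpartial_cvg dH0) in dH.
rewrite /hacute (clpartial_conj S_inv' (clsmooth_cvg x mu S_smooth) dH).
move/subr0_eq: (h_eq mu rho x) ->.
by apply/eqP; rewrite subr_eq0 eq_sym; apply/eqP/gauge_comm/(S_inv' x).1.
Qed.
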